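(* There exists a uniform morphism $\varphi$ on $\{0,1\}$ having two infinite fixed points (one beginning with $0$ and one beginning with $1$) such that one of them is weak abelian periodic and the other is not.
   Context: A morphism $\varphi$ on $\{0,1\}^*$ is uniform if $|\varphi(0)|=|\varphi(1)|$. An infinite fixed point of $\varphi$ is an infinite word $w$ with $\varphi(w)=w$. For nonempty finite $u$, $\rho_a(u)=|u|_a/|u|$, where $|u|_a$ counts occurrences of $a$. An infinite word $w$ is weak abelian periodic if $w=v_0v_1v_2\cdots$ with $v_0$ finite and $v_1,v_2,\dots$ nonempty finite words with $\rho_a(v_i)=\rho_a(v_j)$ for all letters $a$ and all $i,j\ge1$. *)

From mathcomp Require Import all_boot all_order all_algebra.
Set Implicit Arguments. Unset Strict Implicit. Unset Printing Implicit Defensive.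
Import GRing.Theory Num.Theory.

(* Alphabet {0,1} is bool: 0 = false, 1 = true.
   A morphism on {0,1}^* is determined by the images of the letters. *)
Definition morphism := bool -> seq bool.

Definition uniform (phi : morphism) : Prop := size (phi false) = size (phi true).

Definition infword := nat -> bool.

(* Image of an infinite word under a uniform morphism of length k > 0:
   phi(w) = phi(w 0) phi(w 1) ..., so position n lies in block n %/ k at offset n %% k.
   (If k = 0, phi(w) is the empty word, which is never an infinite fixed point.) *)
Definition infinite_fixed_point (phi : morphism) (w : infword) : Prop :=
  let k := size (phi false) in
  (0 < k)%N /\ forall n : nat, w n = nth false (phi (w (n %/ k))) (n %% k).

Definition factor (w : infword) (i j : nat) : seq bool :=
  [seq w k | k <- iota i (j - i)].

Definition rho (a : bool) (u : seq bool) : rat :=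
  ((count_mem a u)%:R / (size u)%:R)%R.

(* w = v_0 v_1 v_2 ... where v_0 = w[0, c 0), v_{i+1} = w[c i, c (i+1)),
   the v_{i+1} nonempty (c strictly increasing) and all v_i (i >= 1)
   having the same letter frequencies. *)
Definition weak_abelian_periodic (w : infword) : Prop :=
  exists c : nat -> nat,
    (forall i, (c i < c i.+1)%N) /\
    forall (a : bool) (i j : nat),
      rho a (factor w (c i) (c i.+1)) = rho a (factor w (c j) (c j.+1)).

From mathcomp Require Import all_boot all_order all_algebra.
From mathcomp Require Import zify.
Import GRing.Theory Num.Theory.

Set Implicit Arguments.
Unset Strict Implicit.
Unset Printing Implicit Defensive.

(* Take 0 -> 000, 1 -> 110. The fixed point starting with 0 is 000..., trivially
   weak abelian periodic. The fixed point starting with 1 has a 1 exactly at the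
   positions whose base-3 expansion avoids the digit 2, so its prefix of length
   3^m contains 2^m ones: the density of 1s tends to 0. A weak abelian periodic
   word with blocks of frequency p/q has, along the cut points, density tending
   to p/q; this is impossible both for p > 0 and (as 1s keep occurring) for p = 0. *)

Definition ones (w : infword) (N : nat) : nat := count_mem true (factor w 0 N).

Lemma onesS (w : infword) N : ones w N.+1 = ones w N + w N.
Proof.
rewrite /ones /factor !subn0 -addn1 iotaD map_cat count_cat /= add0n addn0.
by case: (w N).
Qed.

Lemma ones_mono (w : infword) a b : a <= b -> ones w a <= ones w b.
Proof. by apply: (homo_leq leqnn leq_trans) => N; rewrite onesS leq_addr. Qed.

Lemma ones_lt (w : infword) a b n : a <= n < b -> w n -> ones w a < ones w b.
Proof.
case/andP=> an nb wn.
apply: leq_trans (ones_mono _ nb).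
by rewrite onesS wn addn1 ltnS ones_mono.
Qed.

Lemma count_factor (w : infword) a b : a <= b ->
  count_mem true (factor w a b) = ones w b - ones w a.
Proof.
move=> ab; suff -> : ones w b = ones w a + count_mem true (factor w a b) by rewrite addKn.
by rewrite /ones /factor !subn0 -{1}(subnKC ab) iotaD map_cat count_cat add0n.
Qed.

Lemma rho_true_eq (u v : seq bool) : 0 < size u -> 0 < size v ->
  rho true u = rho true v -> count_mem true u * size v = count_mem true v * size u.
Proof.
move=> u0 v0 /eqP; rewrite /rho eqr_div ?pnatr_eq0 -?lt0n //.
by rewrite -!natrM eqr_nat => /eqP.
Qed.

Section WeakAbelianPeriodic.

Variables (w : infword) (c : nat -> nat).
Hypothesis c_incr : forall i, c i < c i.+1.
Hypothesis rho_cuts : forall i j,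
  rho true (factor w (c i) (c i.+1)) = rho true (factor w (c j) (c j.+1)).

Lemma cut_mono i j : i <= j -> c i <= c j.
Proof. by apply: (homo_leq leqnn leq_trans) => k; exact: ltnW. Qed.

Lemma cut_ge i : i <= c i.
Proof. by elim: i => // i IH; exact: leq_ltn_trans IH (c_incr i). Qed.

Let p := count_mem true (factor w (c 0) (c 1)).
Let q := c 1 - c 0.

Lemma cut_block_ones i :
  (ones w (c i.+1) - ones w (c i)) * q = p * (c i.+1 - c i).
Proof.
have lt_cut j : 0 < size (factor w (c j) (c j.+1)).
  by rewrite size_map size_iota subn_gt0.
have := rho_true_eq (lt_cut i) (lt_cut 0) (rho_cuts i 0).
by rewrite !size_map !size_iota count_factor // ltnW.
Qed.

Lemma cut_prefix_ones i :
  (ones w (c i) - ones w (c 0)) * q = p * (c i - c 0).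
Proof.
elim: i => [|i IH]; first by rewrite !subnn muln0.
have c0i := cut_mono (leq0n i); have cii := ltnW (c_incr i).
have o0i := ones_mono w c0i; have oii := ones_mono w cii.
have -> : ones w (c i.+1) - ones w (c 0)
         = (ones w (c i.+1) - ones w (c i)) + (ones w (c i) - ones w (c 0)) by lia.
have -> : c i.+1 - c 0 = (c i.+1 - c i) + (c i - c 0) by lia.
by rewrite mulnDl mulnDr IH cut_block_ones.
Qed.

End WeakAbelianPeriodic.

Lemma wap_prefix_ones (w : infword) : weak_abelian_periodic w ->
  exists c : nat -> nat, exists p q : nat,
    [/\ forall i, i <= c i, 0 < q &
        forall i, (ones w (c i) - ones w (c 0)) * q = p * (c i - c 0)].
Proof.
case=> c [c_incr rho_cuts]; exists c, (count_mem true (factor w (c 0) (c 1))).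
exists (c 1 - c 0); split; first exact: cut_ge.
  by rewrite subn_gt0.
exact: cut_prefix_ones.
Qed.

(* The fuel argument of [no_digit2] only has to exceed the number of base-3
   digits; [n] itself always does. *)
Fixpoint no_digit2 (fuel n : nat) : bool :=
  if fuel is k.+1 then (n %% 3 != 2) && no_digit2 k (n %/ 3) else true.

Definition cantor_word : infword := fun n => no_digit2 n n.

Definition cantor_morphism : morphism :=
  fun b => if b then [:: true; true; false] else [:: false; false; false].

Definition zero_word : infword := fun _ => false.

Lemma no_digit2_0 k : no_digit2 k 0 = true.
Proof. by elim: k => //= k ->. Qed.

Lemma no_digit2_fuel k1 k2 n : n <= k1 -> n <= k2 -> no_digit2 k1 n = no_digit2 k2 n.
Proof.
elim: k1 k2 n => [|k IH] k2 n h1 h2.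
  by rewrite (_ : n = 0) ?no_digit2_0 //; lia.
case: k2 h2 => [|k2] h2.
  by rewrite (_ : n = 0) ?no_digit2_0 //; lia.
by rewrite /=; congr (_ && _); apply: IH; lia.
Qed.

Lemma cantor_wordE n : cantor_word n = (n %% 3 != 2) && cantor_word (n %/ 3).
Proof.
rewrite /cantor_word; case: n => [|n] //=.
by rewrite (@no_digit2_fuel n (n.+1 %/ 3) (n.+1 %/ 3)) //; lia.
Qed.

Lemma cantor_fixed_point : infinite_fixed_point cantor_morphism cantor_word.
Proof.
split=> // n; rewrite /= cantor_wordE.
by case: (cantor_word _); case: (n %% 3) (ltn_mod n 3) => [|[|[|]]]; rewrite ?andbF.
Qed.

Lemma zero_fixed_point : infinite_fixed_point cantor_morphism zero_word.
Proof. by split=> // n; case: (n %% 3) (ltn_mod n 3) => [|[|[|]]]. Qed.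

Lemma zero_word_wap : weak_abelian_periodic zero_word.
Proof. by exists id; split=> // a i j; rewrite /factor !subSnn. Qed.

Lemma cantor_word_digit N r : r < 3 ->
  cantor_word (3 * N + r) = (r != 2) && cantor_word N.
Proof.
move=> r3; rewrite cantor_wordE.
by rewrite (_ : (3 * N + r) %% 3 = r) 1?(_ : (3 * N + r) %/ 3 = N) //; lia.
Qed.

Lemma ones_cantor_mul3 N : ones cantor_word (3 * N) = 2 * ones cantor_word N.
Proof.
elim: N => // N IH.
rewrite mulnS !addSn add0n !onesS IH.
have := @cantor_word_digit N 0; have := @cantor_word_digit N 1.
have := @cantor_word_digit N 2; rewrite addn0 addn1 addn2 => -> // -> // -> //.
by case: (cantor_word N) => /=; lia.
Qed.

Lemma ones_cantor_pow3 m : ones cantor_word (3 ^ m) = 2 ^ m.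
Proof. by elim: m => // m IH; rewrite !expnS ones_cantor_mul3 IH. Qed.

Lemma cantor_word_pow3 m : cantor_word (3 ^ m).
Proof.
elim: m => // m IH.
by rewrite expnS -[3 * _]addn0 cantor_word_digit.
Qed.

Lemma pow2_pow3_bound m : 2 ^ m * (m + 2) <= 2 * 3 ^ m.
Proof.
elim: m => // m IH.
have : 2 ^ m <= 3 ^ m by case: m {IH} => // m; rewrite leq_exp2r.
rewrite !expnS; nia.
Qed.

Lemma pow2_lt_pow3 K m : 2 * K <= m -> K * 2 ^ m < 3 ^ m.
Proof. by have := pow2_pow3_bound m; have := expn_gt0 2 m; nia. Qed.

Lemma ones_cantor_sparse p q c0 : 0 < p ->
  exists N0, forall N, N0 <= N -> q * ones cantor_word N < p * (N - c0).
Proof.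
move=> p0; set K := 2 * q + p * c0 + 1; exists (3 ^ (2 * K)) => N le_N0_N.
have N0 : 0 < N by apply: leq_trans le_N0_N; rewrite expn_gt0.
have /andP [lo hi] := trunc_log_bounds (isT : 1 < 3) N0.
set m := trunc_log 3 N in lo hi.
have Km : 2 * K <= m.
  by rewrite -ltnS -(ltn_exp2l _ _ (isT : 1 < 3)); apply: leq_ltn_trans le_N0_N hi.
have sparse : ones cantor_word N <= 2 * 2 ^ m.
  by rewrite -expnS -ones_cantor_pow3 ones_mono // ltnW.
have := pow2_lt_pow3 Km; have := expn_gt0 2 m; nia.
Qed.

Lemma cantor_word_not_wap : ~ weak_abelian_periodic cantor_word.
Proof.
case/wap_prefix_ones=> c [p [q [c_ge q0 prefix]]].
have [p0 | p_pos] := posnP p.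
  have c0_lt : c 0 <= 3 ^ c 0 < c (3 ^ c 0).+1.
    by rewrite (ltnW (ltn_expl _ (isT : 1 < 3))) c_ge.
  have := prefix (3 ^ c 0).+1; rewrite p0 mul0n => /eqP.
  rewrite muln_eq0 (negbTE (lt0n_neq0 q0)) orbF subn_eq0 leqNgt => /negP; apply.
  exact: ones_lt c0_lt (cantor_word_pow3 _).
have [N0 sparse] := ones_cantor_sparse q (c 0) p_pos.
have := sparse _ (c_ge N0); rewrite -prefix mulnC ltnNge.
by rewrite leq_mul2r leq_subr orbT.
Qed.

Theorem proposition5 :
  exists phi : morphism,
    uniform phi /\
    exists w0 w1 : infword,
      w0 0%N = false /\ w1 0%N = true /\
      infinite_fixed_point phi w0 /\ infinite_fixed_point phi w1 /\
      ((weak_abelian_periodic w0 /\ ~ weak_abelian_periodic w1) \/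
       (weak_abelian_periodic w1 /\ ~ weak_abelian_periodic w0)).
Proof.
exists cantor_morphism; split; first by [].
exists zero_word, cantor_word; split; first by [].
split; first by [].
split; first exact: zero_fixed_point.
split; first exact: cantor_fixed_point.
by left; split; [exact: zero_word_wap | exact: cantor_word_not_wap].
Qed.
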